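(* Let $\mathscr{C}$ be a 2-complex containing no 3-book, and let $k$ be the number of singular nodes of $\mathscr{C}$. Let $G$ be a graph and let $G'$ be the graph obtained from $G$ by subdividing each edge exactly $k$ times. Then $G$ has an embedding into $\mathscr{C}$ if and only if $G'$ has an embedding $\Gamma'$ into $\mathscr{C}$ such that every singular node of $\mathscr{C}$ lying in the image of $\Gamma'$ is the image under $\Gamma'$ of a vertex of $G'$.
   Context: A 2-complex is an abstract simplicial complex of dimension at most two (nodes, segments, triangles), identified with its geometric realization. A 2-complex contains a 3-book if some three distinct triangles share a common segment. Let $p$ be a node. A cone at $p$ is a cyclic sequence of triangles $t_1,\dots,t_k,t_{k+1}=t_1$ all incident to $p$ such that for each $i$, $t_i$ and $t_{i+1}$ share a segment incident with $p$, and any other pair of these triangles has only $p$ in common. A corner at $p$ is an inclusionwise maximal (non-cyclic) sequence of triangles $t_1,\dots,t_k$ all incident to $p$ such that for $i=1,\dots,k-1$, $t_i$ and $t_{i+1}$ share a segment incident with $p$, and any other pair has only $p$ in common. An isolated segment at $p$ is a segment incident to $p$ but to no triangle. If $\mathscr{C}$ has no 3-book, the segments and triangles incident with $p$ are uniquely partitioned into cones, corners and isolated segments; $p$ is regular if all of them form a single cone or a single corner, and singular otherwise. Graphs are finite, may have loops and multiple edges; embeddings are injective continuous maps. *)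

From Stdlib Require Import Reals List Arith Lia.
Import ListNotations.
Open Scope R_scope.

(** * Finite 2-complexes (abstract simplicial complexes of dim <= 2). *)
Record complex2 := Complex2 {
  nnodes : nat;
  seg : nat -> nat -> Prop;
  tri : nat -> nat -> nat -> Prop }.

Definition is_2complex (C : complex2) : Prop :=
  (forall a b, seg C a b -> (a < nnodes C)%nat /\ (b < nnodes C)%nat) /\
  (forall a, ~ seg C a a) /\
  (forall a b, seg C a b -> seg C b a) /\
  (forall a b c, tri C a b c -> a <> b /\ b <> c /\ a <> c) /\
  (forall a b c, tri C a b c -> tri C b a c) /\
  (forall a b c, tri C a b c -> tri C a c b) /\
  (forall a b c, tri C a b c -> seg C a b).

Definition has_3book (C : complex2) : Prop :=
  exists a b c1 c2 c3, tri C a b c1 /\ tri C a b c2 /\ tri C a b c3 /\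
    c1 <> c2 /\ c1 <> c3 /\ c2 <> c3.

Definition tri3 := (nat * nat * nat)%type.
Definition in3 (y : nat) (t : tri3) : Prop :=
  let '(a, b, c) := t in y = a \/ y = b \/ y = c.
Definition is_tri (C : complex2) (t : tri3) : Prop :=
  let '(a, b, c) := t in tri C a b c.
Definition same3 (t u : tri3) : Prop := forall y, in3 y t <-> in3 y u.
Definition mem3 (t : tri3) (ts : list tri3) : Prop := exists u, In u ts /\ same3 t u.
Definition d3 : tri3 := (0%nat, 0%nat, 0%nat).

Definition shares_seg_at (p : nat) (t u : tri3) : Prop :=
  in3 p t /\ in3 p u /\
  exists x, x <> p /\ in3 x t /\ in3 x u /\
    forall y, in3 y t -> in3 y u -> y = p \/ y = x.

Definition only_p (p : nat) (t u : tri3) : Prop :=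
  forall y, in3 y t -> in3 y u -> y = p.

Definition cone_at (C : complex2) (p : nat) (ts : list tri3) : Prop :=
  let k := length ts in
  (3 <= k)%nat /\
  (forall t, In t ts -> is_tri C t /\ in3 p t) /\
  (forall i, (i < k)%nat ->
     shares_seg_at p (nth i ts d3) (nth ((i + 1) mod k) ts d3)) /\
  (forall i j, (i < k)%nat -> (j < k)%nat -> i <> j ->
     j <> ((i + 1) mod k)%nat -> i <> ((j + 1) mod k)%nat ->
     only_p p (nth i ts d3) (nth j ts d3)).

Definition corner_seq (C : complex2) (p : nat) (ts : list tri3) : Prop :=
  let k := length ts in
  (1 <= k)%nat /\
  (forall t, In t ts -> is_tri C t /\ in3 p t) /\
  (forall i, (i + 1 < k)%nat -> shares_seg_at p (nth i ts d3) (nth (i + 1) ts d3)) /\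
  (forall i j, (j < k)%nat -> (i + 1 < j)%nat ->
     only_p p (nth i ts d3) (nth j ts d3)).

Definition corner_at (C : complex2) (p : nat) (ts : list tri3) : Prop :=
  corner_seq C p ts /\
  forall ts', corner_seq C p ts' ->
    (forall t, mem3 t ts -> mem3 t ts') -> (forall t, mem3 t ts' -> mem3 t ts).

(** [p] is regular: the segments and triangles incident with [p] form a
    single cone or a single corner (no isolated segment, and all triangles
    at [p] belong to that one cone/corner). *)
Definition regular (C : complex2) (p : nat) : Prop :=
  (forall q, seg C p q -> exists a b, tri C p a b /\ (q = a \/ q = b)) /\
  exists ts, (cone_at C p ts \/ corner_at C p ts) /\
    (forall a b, tri C p a b -> mem3 (p, a, b) ts).

Definition singular (C : complex2) (p : nat) : Prop :=
  (p < nnodes C)%nat /\ ~ regular C p.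

Definition num_singular (C : complex2) (k : nat) : Prop :=
  exists l, NoDup l /\ (forall p, In p l <-> singular C p) /\ length l = k.

(** * Geometric realization: barycentric coordinates in R^nnodes. *)
Fixpoint sumR (n : nat) (f : nat -> R) : R :=
  match n with O => 0 | S m => sumR m f + f m end.

Definition point := nat -> R.
Definition eqpt (x y : point) : Prop := forall i, x i = y i.

Definition in_real (C : complex2) (x : point) : Prop :=
  (forall i, (nnodes C <= i)%nat -> x i = 0) /\
  (forall i, 0 <= x i) /\
  sumR (nnodes C) x = 1 /\
  (forall a b, a <> b -> 0 < x a -> 0 < x b -> seg C a b) /\
  (forall a b c, a <> b -> b <> c -> a <> c ->
     0 < x a -> 0 < x b -> 0 < x c -> tri C a b c) /\
  (forall a b c d, a <> b -> a <> c -> a <> d -> b <> c -> b <> d -> c <> d ->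
     ~ (0 < x a /\ 0 < x b /\ 0 < x c /\ 0 < x d)).

Definition node_pt (p : nat) : point := fun i => if Nat.eqb i p then 1 else 0.

Definition cont01 (C : complex2) (g : R -> point) : Prop :=
  forall t, 0 <= t <= 1 -> forall eps, 0 < eps -> exists delta, 0 < delta /\
    forall s, 0 <= s <= 1 -> Rabs (s - t) < delta ->
      forall i, (i < nnodes C)%nat -> Rabs (g s i - g t i) < eps.

(** * Finite multigraphs (loops and multiple edges allowed). *)
Record graph := Graph { gnv : nat; gne : nat; gsrc : nat -> nat; gtgt : nat -> nat }.

Definition wf_graph (G : graph) : Prop :=
  forall e, (e < gne G)%nat -> (gsrc G e < gnv G)%nat /\ (gtgt G e < gnv G)%nat.

(** Subdivide every edge exactly [k] times: edge [e] becomes a path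
    src e = w_0, w_1, ..., w_k, w_(k+1) = tgt e with new vertices
    w_j = gnv G + e*k + (j-1). *)
Definition subdiv_node (G : graph) (k e j : nat) : nat :=
  if Nat.eqb j 0 then gsrc G e
  else if Nat.eqb j (k + 1) then gtgt G e
  else (gnv G + e * k + (j - 1))%nat.

Definition subdivide (G : graph) (k : nat) : graph :=
  Graph (gnv G + gne G * k)%nat (gne G * (k + 1))%nat
    (fun e' => subdiv_node G k (e' / (k + 1)) (e' mod (k + 1)))
    (fun e' => subdiv_node G k (e' / (k + 1)) (e' mod (k + 1) + 1)).

(** An embedding of (the realization of) [G] into [C]: vertices go to points
    [fv v], edge [e] is traversed by the path [fe e] on [0,1]; the induced map
    on the realization of G is continuous and injective (G is compact, so this
    is a topological embedding). *)
Definition is_embedding (G : graph) (C : complex2)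
    (fv : nat -> point) (fe : nat -> R -> point) : Prop :=
  (forall v, (v < gnv G)%nat -> in_real C (fv v)) /\
  (forall e, (e < gne G)%nat ->
     cont01 C (fe e) /\ (forall t, 0 <= t <= 1 -> in_real C (fe e t)) /\
     eqpt (fe e 0) (fv (gsrc G e)) /\ eqpt (fe e 1) (fv (gtgt G e))) /\
  (forall v w, (v < gnv G)%nat -> (w < gnv G)%nat -> eqpt (fv v) (fv w) -> v = w) /\
  (forall e v t, (e < gne G)%nat -> (v < gnv G)%nat -> 0 < t < 1 ->
     ~ eqpt (fe e t) (fv v)) /\
  (forall e e' t t', (e < gne G)%nat -> (e' < gne G)%nat -> 0 < t < 1 -> 0 < t' < 1 ->
     eqpt (fe e t) (fe e' t') -> e = e' /\ t = t').

Definition embeds (G : graph) (C : complex2) : Prop :=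
  exists fv fe, is_embedding G C fv fe.

Definition in_image (G : graph) (fv : nat -> point) (fe : nat -> R -> point)
    (x : point) : Prop :=
  (exists v, (v < gnv G)%nat /\ eqpt (fv v) x) \/
  (exists e t, (e < gne G)%nat /\ 0 <= t <= 1 /\ eqpt (fe e t) x).

From Stdlib Require Import Reals List Arith Lia Lra ClassicalEpsilon.
Import ListNotations.
Open Scope R_scope.

(* An embedded edge passes through each singular node at most once, hence through
   singular nodes at no more than k interior times.  Cutting the edge at those times,
   padded with further cut points up to k of them, embeds the k-fold subdivision so that
   singular nodes are met only at vertices.  Conversely, concatenating the k + 1 pieces
   of each subdivided edge gives back an embedding of G.  Neither direction uses the
   hypotheses on the complex. *)

Definition cont_on (n : nat) (a b : R) (g : R -> point) : Prop :=
  forall t, a <= t <= b -> forall eps, 0 < eps -> exists delta, 0 < delta /\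
    forall s, a <= s <= b -> Rabs (s - t) < delta ->
      forall i, (i < n)%nat -> Rabs (g s i - g t i) < eps.

Lemma cont_on_ext n a b g h : cont_on n a b g ->
  (forall x, a <= x <= b -> eqpt (g x) (h x)) -> cont_on n a b h.
Proof.
  intros Hg He t Ht eps Heps. destruct (Hg t Ht eps Heps) as [d [Hd H]].
  exists d; split; auto. intros s Hs Hst i Hi.
  rewrite <- (He s Hs i), <- (He t Ht i). auto.
Qed.

Lemma cont_on_comp_affine n a b c d g (al lam : R) : cont_on n a b g -> 0 < lam ->
  (forall s, c <= s <= d -> a <= al + lam * s <= b) ->
  cont_on n c d (fun s => g (al + lam * s)).
Proof.
  intros Hg Hl Hm t Ht eps Heps.
  destruct (Hg _ (Hm t Ht) eps Heps) as [de [Hd H]].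
  exists (de / lam). split; [apply Rdiv_lt_0_compat; auto|].
  intros s Hs Hst i Hi. apply H; auto.
  replace (al + lam * s - (al + lam * t)) with (lam * (s - t)) by ring.
  rewrite Rabs_mult, (Rabs_right lam) by lra.
  apply Rmult_lt_reg_r with (/ lam); [apply Rinv_0_lt_compat; auto|].
  replace (lam * Rabs (s - t) * / lam) with (Rabs (s - t)) by (field; lra).
  exact Hst.
Qed.

Lemma cont_on_glue n a b c g : a <= b <= c -> cont_on n a b g -> cont_on n b c g ->
  cont_on n a c g.
Proof.
  intros Hb H1 H2 t Ht eps Heps.
  destruct (Rlt_le_dec t b) as [Htb|Htb]; [|destruct (Rlt_le_dec b t) as [Hbt|Hbt]].
  - destruct (H1 t ltac:(lra) eps Heps) as [d [Hd H]].
    exists (Rmin d (b - t)). split; [apply Rmin_glb_lt; lra|].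
    intros s Hs Hst i Hi.
    pose proof (Rlt_le_trans _ _ _ Hst (Rmin_r d (b - t))) as Hb'.
    apply Rabs_def2 in Hb'.
    apply H; [lra| eapply Rlt_le_trans; [exact Hst| apply Rmin_l] | auto].
  - destruct (H2 t ltac:(lra) eps Heps) as [d [Hd H]].
    exists (Rmin d (t - b)). split; [apply Rmin_glb_lt; lra|].
    intros s Hs Hst i Hi.
    pose proof (Rlt_le_trans _ _ _ Hst (Rmin_r d (t - b))) as Hb'.
    apply Rabs_def2 in Hb'.
    apply H; [lra| eapply Rlt_le_trans; [exact Hst| apply Rmin_l] | auto].
  - assert (t = b) by lra. subst t.
    destruct (H1 b ltac:(lra) eps Heps) as [d1 [Hd1 K1]].
    destruct (H2 b ltac:(lra) eps Heps) as [d2 [Hd2 K2]].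
    exists (Rmin d1 d2). split; [apply Rmin_glb_lt; lra|].
    intros s Hs Hst i Hi. destruct (Rle_dec s b).
    + apply K1; [lra| eapply Rlt_le_trans; [exact Hst| apply Rmin_l] | auto].
    + apply K2; [lra| eapply Rlt_le_trans; [exact Hst| apply Rmin_r] | auto].
Qed.

Lemma eqpt_sym x y : eqpt x y -> eqpt y x.
Proof. intros H i; auto. Qed.

Lemma eqpt_trans x y z : eqpt x y -> eqpt y z -> eqpt x z.
Proof. intros H1 H2 i; rewrite H1; auto. Qed.

(* [concat_paths f m] runs through [f 0, ..., f m] on [0, m + 1], path [f j] on [j, j + 1]. *)
Fixpoint concat_paths (f : nat -> R -> point) (m : nat) (x : R) : point :=
  match m with
  | O => f O x
  | S m' => if Rle_dec x (INR m) then concat_paths f m' x else f m (x - INR m)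
  end.

Lemma concat_paths_S f m x : concat_paths f (S m) x =
  if Rle_dec x (INR (S m)) then concat_paths f m x else f (S m) (x - INR (S m)).
Proof. reflexivity. Qed.

Lemma concat_paths_piece f m x : 0 <= x <= INR m + 1 ->
  exists j, (j <= m)%nat /\ concat_paths f m x = f j (x - INR j) /\
    INR j <= x <= INR j + 1 /\ (j = O \/ INR j < x).
Proof.
  induction m; intros Hx.
  - exists O. simpl in *. split; [lia|]. split; [f_equal; ring|]. split; [lra|auto].
  - rewrite concat_paths_S. destruct (Rle_dec x (INR (S m))) as [H|H]; rewrite S_INR in *.
    + destruct (IHm ltac:(lra)) as [j [Hj E]]. exists j. split; [lia|exact E].
    + exists (S m). rewrite S_INR. split; [lia|]. split; [reflexivity|]. split; [lra|right; lra].
Qed.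

Lemma concat_paths_interior f m x : 0 < x < INR m + 1 ->
  exists j, (j <= m)%nat /\ concat_paths f m x = f j (x - INR j) /\
    ((0 < x - INR j < 1) \/ (x - INR j = 1 /\ (j < m)%nat)).
Proof.
  intros Hx. destruct (concat_paths_piece f m x ltac:(lra)) as [j [Hj [E [R1 R2]]]].
  exists j. split; [auto|]. split; [auto|].
  destruct (Req_dec (x - INR j) 1) as [H1|H1].
  - right. split; [auto|]. apply INR_lt. lra.
  - left. destruct R2 as [->|R2]; simpl in *; lra.
Qed.

Lemma concat_paths_0 f m : concat_paths f m 0 = f O 0.
Proof.
  induction m; [reflexivity|]. rewrite concat_paths_S.
  destruct (Rle_dec 0 (INR (S m))) as [_|H]; [auto|]. exfalso; apply H, pos_INR.
Qed.

Lemma concat_paths_end f m : concat_paths f m (INR m + 1) = f m 1.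
Proof.
  destruct m; [simpl; f_equal; ring|]. rewrite concat_paths_S.
  destruct (Rle_dec (INR (S m) + 1) (INR (S m))); [lra|f_equal; ring].
Qed.

Lemma cont_on_concat_paths n f m : (forall j, (j <= m)%nat -> cont_on n 0 1 (f j)) ->
  (forall j, (j < m)%nat -> eqpt (f j 1) (f (S j) 0)) ->
  cont_on n 0 (INR m + 1) (concat_paths f m).
Proof.
  induction m; intros Hc Hj.
  - simpl. replace (0 + 1) with 1 by ring. apply Hc; lia.
  - pose proof (pos_INR m). rewrite S_INR in *.
    apply cont_on_glue with (INR m + 1); [lra| |].
    + apply cont_on_ext with (concat_paths f m).
      * apply IHm; intros; [apply Hc|apply Hj]; lia.
      * intros x Hx i. rewrite concat_paths_S.
        destruct (Rle_dec x (INR (S m))) as [|H']; rewrite ?S_INR in *; [auto|lra].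
    + apply cont_on_ext with (fun s => f (S m) (- (INR m + 1) + 1 * s)).
      * apply cont_on_comp_affine with 0 1; [apply Hc; lia|lra|intros; lra].
      * intros x Hx i. rewrite concat_paths_S. rewrite S_INR.
        destruct (Rle_dec x (INR m + 1)).
        -- assert (x = INR m + 1) by lra. subst x. rewrite concat_paths_end.
           replace (- (INR m + 1) + 1 * (INR m + 1)) with 0 by ring.
           symmetry. apply Hj. lia.
        -- f_equal. ring.
Qed.

Lemma div_mod_of_lt (m e j : nat) : (j < m)%nat ->
  ((e * m + j) / m = e /\ (e * m + j) mod m = j)%nat.
Proof.
  intros Hj. split.
  - symmetry. apply Nat.div_unique with j; lia.
  - symmetry. apply Nat.mod_unique with e; lia.
Qed.

Lemma mul_add_inj m e j e' j' : (j < m)%nat -> (j' < m)%nat ->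
  (e * m + j = e' * m + j')%nat -> e = e' /\ j = j'.
Proof.
  intros Hj Hj' E. destruct (div_mod_of_lt m e j Hj) as [A1 A2].
  destruct (div_mod_of_lt m e' j' Hj') as [A3 A4].
  rewrite E in A1, A2. split; congruence.
Qed.

Section Subdivision.
Variables (G : graph) (k : nat).

Lemma subdivide_src e j : (j <= k)%nat ->
  gsrc (subdivide G k) (e * (k + 1) + j) = subdiv_node G k e j.
Proof.
  intros Hj. simpl. destruct (div_mod_of_lt (k + 1) e j ltac:(lia)) as [-> ->].
  reflexivity.
Qed.

Lemma subdivide_tgt e j : (j <= k)%nat ->
  gtgt (subdivide G k) (e * (k + 1) + j) = subdiv_node G k e (j + 1).
Proof.
  intros Hj. simpl. destruct (div_mod_of_lt (k + 1) e j ltac:(lia)) as [-> ->].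
  reflexivity.
Qed.

Lemma subdiv_node_first e : subdiv_node G k e 0 = gsrc G e.
Proof. reflexivity. Qed.

Lemma subdiv_node_last e : subdiv_node G k e (k + 1) = gtgt G e.
Proof.
  unfold subdiv_node. rewrite Nat.eqb_refl.
  destruct (Nat.eqb_spec (k + 1) 0); [lia|reflexivity].
Qed.

Lemma subdiv_node_mid e j : (1 <= j <= k)%nat ->
  subdiv_node G k e j = (gnv G + e * k + (j - 1))%nat.
Proof.
  intros Hj. unfold subdiv_node.
  destruct (Nat.eqb_spec j 0); [lia|]. destruct (Nat.eqb_spec j (k + 1)); [lia|reflexivity].
Qed.

Lemma subdivide_edge_lt e j : (e < gne G)%nat -> (j <= k)%nat ->
  (e * (k + 1) + j < gne (subdivide G k))%nat.
Proof. simpl. nia. Qed.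

Lemma subdivide_new_vertex_lt e j : (e < gne G)%nat -> (j < k)%nat ->
  (gnv G + e * k + j < gnv (subdivide G k))%nat.
Proof. simpl. nia. Qed.

Lemma subdivide_old_vertex_lt v : (v < gnv G)%nat -> (v < gnv (subdivide G k))%nat.
Proof. simpl. lia. Qed.

Lemma subdiv_node_lt e j : wf_graph G -> (e < gne G)%nat -> (j <= k + 1)%nat ->
  (subdiv_node G k e j < gnv (subdivide G k))%nat.
Proof.
  intros Hwf He Hj. simpl. destruct (Hwf e He).
  destruct (Nat.eq_dec j 0) as [->|]; [rewrite subdiv_node_first; lia|].
  destruct (Nat.eq_dec j (k + 1)) as [->|]; [rewrite subdiv_node_last; lia|].
  rewrite subdiv_node_mid by lia. nia.
Qed.

Lemma subdivide_edge_cases e' : (e' < gne (subdivide G k))%nat ->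
  exists e j, (e < gne G)%nat /\ (j <= k)%nat /\ e' = (e * (k + 1) + j)%nat.
Proof.
  simpl. intros H. assert (Hk : (k + 1 <> 0)%nat) by lia.
  pose proof (Nat.div_mod e' (k + 1) Hk). pose proof (Nat.mod_upper_bound e' (k + 1) Hk).
  exists (e' / (k + 1))%nat, (e' mod (k + 1))%nat. split; [nia|lia].
Qed.

Lemma subdivide_vertex_cases w : (w < gnv (subdivide G k))%nat ->
  (w < gnv G)%nat \/
  exists e j, (e < gne G)%nat /\ (j < k)%nat /\ w = (gnv G + e * k + j)%nat.
Proof.
  simpl. intros H. destruct (Nat.lt_ge_cases w (gnv G)); [left; auto|right].
  assert (Hk : (k <> 0)%nat) by (intro; subst; lia).
  pose proof (Nat.div_mod (w - gnv G) k Hk). pose proof (Nat.mod_upper_bound (w - gnv G) k Hk).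
  exists ((w - gnv G) / k)%nat, ((w - gnv G) mod k)%nat. split; [nia|lia].
Qed.

End Subdivision.

Section Unsubdivide.
Variables (G : graph) (C : complex2) (k : nat) (fv : nat -> point) (fe : nat -> R -> point).
Hypothesis Hemb : is_embedding (subdivide G k) C fv fe.

Definition glued_edge (e : nat) (t : R) : point :=
  concat_paths (fun j => fe (e * (k + 1) + j)%nat) k (INR (S k) * t).

Lemma piece_end e j : (e < gne G)%nat -> (j < k)%nat ->
  eqpt (fe (e * (k + 1) + j)%nat 1) (fv (gnv G + e * k + j)%nat).
Proof.
  intros He Hj. destruct Hemb as [_ [Hfe _]].
  destruct (Hfe _ (subdivide_edge_lt G k e j He ltac:(lia))) as [_ [_ [_ E]]].
  rewrite subdivide_tgt, subdiv_node_mid in E by lia.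
  replace (j + 1 - 1)%nat with j in E by lia. exact E.
Qed.

Lemma piece_start e j : (e < gne G)%nat -> (j < k)%nat ->
  eqpt (fe (e * (k + 1) + S j)%nat 0) (fv (gnv G + e * k + j)%nat).
Proof.
  intros He Hj. destruct Hemb as [_ [Hfe _]].
  destruct (Hfe _ (subdivide_edge_lt G k e (S j) He ltac:(lia))) as [_ [_ [E _]]].
  rewrite subdivide_src, subdiv_node_mid in E by lia.
  replace (S j - 1)%nat with j in E by lia. exact E.
Qed.

Lemma glued_edge_interior e t : 0 < t < 1 ->
  (exists j u, (j <= k)%nat /\ 0 < u < 1 /\ INR (S k) * t = INR j + u /\
     glued_edge e t = fe (e * (k + 1) + j)%nat u) \/
  (exists j, (j < k)%nat /\ INR (S k) * t = INR j + 1 /\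
     glued_edge e t = fe (e * (k + 1) + j)%nat 1).
Proof.
  intros Ht. pose proof (pos_INR k).
  destruct (concat_paths_interior (fun j => fe (e * (k + 1) + j)%nat) k (INR (S k) * t))
    as [j [Hj [E [Hu|[Hu Hjk]]]]]; [rewrite S_INR; nra| |].
  - left. exists j, (INR (S k) * t - INR j). unfold glued_edge. rewrite E.
    repeat split; auto; lra.
  - right. exists j. unfold glued_edge. rewrite E, Hu. repeat split; auto; lra.
Qed.

Lemma glued_edge_path e : (e < gne G)%nat ->
  cont01 C (glued_edge e) /\ (forall t, 0 <= t <= 1 -> in_real C (glued_edge e t)) /\
  eqpt (glued_edge e 0) (fv (gsrc G e)) /\ eqpt (glued_edge e 1) (fv (gtgt G e)).
Proof.
  intros He. destruct Hemb as [_ [Hfe _]].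
  assert (Hpiece := fun j Hj => Hfe _ (subdivide_edge_lt G k e j He Hj)).
  pose proof (pos_INR k). pose proof (S_INR k) as HSk.
  split; [|split; [|split]].
  - apply cont_on_ext with (fun t => concat_paths (fun j => fe (e * (k + 1) + j)%nat) k
                                       (0 + INR (S k) * t)).
    + apply cont_on_comp_affine with 0 (INR k + 1); [| lra | intros; nra].
      apply cont_on_concat_paths.
      * intros j Hj. apply (Hpiece j Hj).
      * intros j Hj. eapply eqpt_trans; [apply piece_end|apply eqpt_sym, piece_start]; auto.
    + intros x _ i. unfold glued_edge. rewrite Rplus_0_l. reflexivity.
  - intros t Ht.
    destruct (concat_paths_piece (fun j => fe (e * (k + 1) + j)%nat) k (INR (S k) * t))
      as [j [Hj [E [Hx _]]]]; [nra|].
    unfold glued_edge. rewrite E. apply (Hpiece j Hj). lra.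
  - unfold glued_edge. rewrite Rmult_0_r, concat_paths_0.
    destruct (Hpiece 0%nat ltac:(lia)) as [_ [_ [E _]]].
    rewrite subdivide_src in E by lia. exact E.
  - unfold glued_edge. rewrite Rmult_1_r, HSk, concat_paths_end.
    destruct (Hpiece k ltac:(lia)) as [_ [_ [_ E]]].
    rewrite subdivide_tgt, subdiv_node_last in E by lia. exact E.
Qed.

Lemma glued_edge_avoids_vertices e v t : (e < gne G)%nat -> (v < gnv G)%nat -> 0 < t < 1 ->
  ~ eqpt (glued_edge e t) (fv v).
Proof.
  intros He Hv Ht E. destruct Hemb as [_ [_ [Hinj [Hev _]]]].
  destruct (glued_edge_interior e t Ht) as [[j [u [Hj [Hu [_ Eu]]]]]|[j [Hj [_ Ej]]]].
  - rewrite Eu in E. eapply Hev; eauto using subdivide_edge_lt, subdivide_old_vertex_lt.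
  - rewrite Ej in E.
    assert (gnv G + e * k + j = v)%nat; [|lia].
    apply Hinj; auto using subdivide_new_vertex_lt, subdivide_old_vertex_lt.
    eapply eqpt_trans; [apply eqpt_sym, piece_end|]; eauto.
Qed.

Lemma glued_edge_injective e e' t t' : (e < gne G)%nat -> (e' < gne G)%nat ->
  0 < t < 1 -> 0 < t' < 1 -> eqpt (glued_edge e t) (glued_edge e' t') -> e = e' /\ t = t'.
Proof.
  intros He He' Ht Ht' E. destruct Hemb as [_ [_ [Hinj [Hev Hee]]]].
  destruct (glued_edge_interior e t Ht) as [[j [u [Hj [Hu [Tu Eu]]]]]|[j [Hj [Tj Ej]]]];
  destruct (glued_edge_interior e' t' Ht')
    as [[j' [u' [Hj' [Hu' [Tu' Eu']]]]]|[j' [Hj' [Tj' Ej']]]];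
  rewrite ?Eu, ?Ej, ?Eu', ?Ej' in E.
  - destruct (Hee _ _ _ _ (subdivide_edge_lt G k e j He Hj) (subdivide_edge_lt G k e' j' He' Hj')
                Hu Hu' E) as [Q <-].
    destruct (mul_add_inj (k + 1) e j e' j' ltac:(lia) ltac:(lia) Q) as [<- <-].
    split; [auto|]. apply Rmult_eq_reg_l with (INR (S k)); [lra|]. apply not_0_INR; lia.
  - exfalso. apply (Hev (e * (k + 1) + j)%nat (gnv G + e' * k + j')%nat u);
      auto using subdivide_edge_lt, subdivide_new_vertex_lt.
    eapply eqpt_trans; [exact E|apply piece_end]; auto.
  - exfalso. apply (Hev (e' * (k + 1) + j')%nat (gnv G + e * k + j)%nat u');
      auto using subdivide_edge_lt, subdivide_new_vertex_lt.
    eapply eqpt_trans; [apply eqpt_sym, E|apply piece_end]; auto.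
  - assert (Q : (gnv G + e * k + j = gnv G + e' * k + j')%nat).
    { apply Hinj; auto using subdivide_new_vertex_lt.
      eapply eqpt_trans; [apply eqpt_sym, piece_end|]; auto.
      eapply eqpt_trans; [exact E|apply piece_end]; auto. }
    destruct (mul_add_inj k e j e' j' Hj Hj' ltac:(lia)) as [<- <-].
    split; [auto|]. apply Rmult_eq_reg_l with (INR (S k)); [lra|]. apply not_0_INR; lia.
Qed.

Lemma glued_edge_is_embedding : is_embedding G C fv glued_edge.
Proof.
  destruct Hemb as [Hfv [_ [Hinj _]]].
  split; [|split; [|split; [|split]]].
  - intros v Hv. apply Hfv, subdivide_old_vertex_lt, Hv.
  - exact glued_edge_path.
  - intros v w Hv Hw. apply Hinj; apply subdivide_old_vertex_lt; auto.
  - exact glued_edge_avoids_vertices.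
  - exact glued_edge_injective.
Qed.

End Unsubdivide.

Definition incr_upto (s : nat -> R) (n : nat) : Prop :=
  forall a b, (a < b)%nat -> (b <= n)%nat -> s a < s b.

Definition partition01 (s : nat -> R) (k : nat) : Prop :=
  incr_upto s (k + 1) /\ s O = 0 /\ s (k + 1)%nat = 1.

Section IncreasingSequences.
Variables (s : nat -> R) (n : nat).
Hypothesis Hs : incr_upto s n.

Lemma incr_upto_le a b : (a <= b)%nat -> (b <= n)%nat -> s a <= s b.
Proof.
  intros Hab Hb. destruct (Nat.eq_dec a b) as [->|]; [lra|]. left; apply Hs; lia.
Qed.

Lemma incr_upto_inj a b : (a <= n)%nat -> (b <= n)%nat -> s a = s b -> a = b.
Proof.
  intros Ha Hb E. destruct (lt_eq_lt_dec a b) as [[Hlt|]|Hlt]; auto;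
    [pose proof (Hs a b Hlt Hb)|pose proof (Hs b a Hlt Ha)]; lra.
Qed.

Lemma incr_upto_gap_empty i j : (j < n)%nat -> (i <= n)%nat -> ~ (s j < s i < s (j + 1)%nat).
Proof.
  intros Hj Hi [H1 H2]. destruct (le_lt_dec i j).
  - pose proof (incr_upto_le i j ltac:(lia) ltac:(lia)). lra.
  - pose proof (incr_upto_le (j + 1) i ltac:(lia) ltac:(lia)). lra.
Qed.

Lemma incr_upto_gap_unique j1 j2 x : (j1 < n)%nat -> (j2 < n)%nat ->
  s j1 < x < s (j1 + 1)%nat -> s j2 < x < s (j2 + 1)%nat -> j1 = j2.
Proof.
  intros H1 H2 A B. destruct (lt_eq_lt_dec j1 j2) as [[Hlt|]|Hlt]; auto.
  - pose proof (incr_upto_le (j1 + 1) j2 ltac:(lia) ltac:(lia)). lra.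
  - pose proof (incr_upto_le (j2 + 1) j1 ltac:(lia) ltac:(lia)). lra.
Qed.

Lemma incr_upto_locate x : s O <= x < s n -> exists j, (j < n)%nat /\ s j <= x < s (j + 1)%nat.
Proof.
  clear Hs. induction n as [|m IH]; intros Hx; [lra|].
  destruct (Rlt_le_dec x (s m)) as [Hlt|Hge].
  - destruct IH as [j [Hj Hx']]; [lra|]. exists j. split; [lia|exact Hx'].
  - exists m. replace (m + 1)%nat with (S m) by lia. split; [lia|lra].
Qed.

End IncreasingSequences.

Definition insert_point (s : nat -> R) (j : nat) (x : R) (i : nat) : R :=
  if Nat.leb i j then s i else if Nat.eqb i (j + 1) then x else s (i - 1)%nat.

Lemma insert_point_partition s k j x : partition01 s k -> (j <= k)%nat ->
  s j < x < s (j + 1)%nat ->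
  partition01 (insert_point s j x) (S k) /\ insert_point s j x (j + 1)%nat = x /\
  forall i, (1 <= i <= k)%nat ->
    exists i', (1 <= i' <= S k)%nat /\ insert_point s j x i' = s i.
Proof.
  intros [Hs [H0 H1]] Hj Hx. unfold insert_point.
  assert (Eq : forall i, (i <= j)%nat -> Nat.leb i j = true) by (intros; apply Nat.leb_le; lia).
  assert (Ne : forall i, (j < i)%nat -> Nat.leb i j = false) by (intros; apply Nat.leb_gt; lia).
  split; [split; [|split]|split].
  - intros a b Hab Hb.
    destruct (Nat.leb_spec a j), (Nat.leb_spec b j); try lia;
    destruct (Nat.eqb_spec a (j + 1)), (Nat.eqb_spec b (j + 1)); subst; try lia.
    + apply Hs; lia.
    + pose proof (incr_upto_le s (k + 1) Hs a j ltac:(lia) ltac:(lia)). lra.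
    + pose proof (incr_upto_le s (k + 1) Hs a j ltac:(lia) ltac:(lia)).
      pose proof (incr_upto_le s (k + 1) Hs (j + 1) (b - 1) ltac:(lia) ltac:(lia)). lra.
    + pose proof (incr_upto_le s (k + 1) Hs (j + 1) (b - 1) ltac:(lia) ltac:(lia)). lra.
    + apply Hs; lia.
  - rewrite Eq by lia. exact H0.
  - rewrite Ne by lia. destruct (Nat.eqb_spec (S k + 1) (j + 1)); [lia|].
    replace (S k + 1 - 1)%nat with (k + 1)%nat by lia. exact H1.
  - rewrite Ne, Nat.eqb_refl by lia. reflexivity.
  - intros i Hi. destruct (le_lt_dec i j).
    + exists i. rewrite Eq by lia. split; [lia|reflexivity].
    + exists (S i). rewrite Ne by lia. destruct (Nat.eqb_spec (S i) (j + 1)); [lia|].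
      split; [lia|]. f_equal; lia.
Qed.

Lemma partition01_add_point s k t : partition01 s k -> 0 < t < 1 ->
  exists s', partition01 s' (S k) /\ (exists j, (1 <= j <= S k)%nat /\ s' j = t) /\
    forall i, (1 <= i <= k)%nat -> exists i', (1 <= i' <= S k)%nat /\ s' i' = s i.
Proof.
  intros Hp Ht. pose proof Hp as [Hs [H0 H1]].
  destruct (incr_upto_locate s (k + 1) t) as [j [Hj [Hle Hlt]]]; [lra|].
  destruct (Req_dec (s j) t) as [Heq|Hne].
  - (* [t] is already a cut point: insert a dummy point instead *)
    assert (Hgap : s O < (s O + s 1%nat) / 2 < s (0 + 1)%nat).
    { pose proof (Hs 0%nat 1%nat ltac:(lia) ltac:(lia)). simpl. lra. }
    destruct (insert_point_partition s k 0 _ Hp ltac:(lia) Hgap) as [Hp' [_ Hcov]].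
    eexists. split; [exact Hp'|split; [|exact Hcov]].
    destruct (Nat.eq_dec j 0) as [->|]; [lra|].
    destruct (Hcov j ltac:(lia)) as [j' [Hj' E]]. exists j'. split; [auto|congruence].
  - destruct (insert_point_partition s k j t Hp ltac:(lia) ltac:(lra)) as [Hp' [Ej Hcov]].
    eexists. split; [exact Hp'|split; [|exact Hcov]]. exists (j + 1)%nat. split; [lia|exact Ej].
Qed.

Lemma partition01_through k (T : list R) : (forall t, In t T -> 0 < t < 1) -> (length T <= k)%nat ->
  exists s, partition01 s k /\ forall t, In t T -> exists j, (1 <= j <= k)%nat /\ s j = t.
Proof.
  revert T. induction k as [|k IH]; intros T HT Hlen.
  - exists INR. destruct T; [|simpl in Hlen; lia].
    split; [|intros _ []]. split; [|split; simpl; auto].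
    intros a b Hab _. apply lt_INR, Hab.
  - destruct T as [|t T0].
    + destruct (IH [] ltac:(intros _ []) ltac:(simpl; lia)) as [s [Hp _]].
      destruct (partition01_add_point s k (/ 2) Hp ltac:(lra)) as [s' [Hp' _]].
      exists s'. split; [exact Hp'|intros _ []].
    + destruct (IH (remove Req_EM_T t T0)) as [s [Hp Hcov]].
      { intros y Hy. apply HT. right. exact (proj1 (in_remove _ _ _ _ Hy)). }
      { pose proof (remove_length_le Req_EM_T T0 t). simpl in Hlen. lia. }
      destruct (partition01_add_point s k t Hp (HT t (or_introl eq_refl)))
        as [s' [Hp' [Ht Hcov']]].
      exists s'. split; [exact Hp'|]. intros y [<-|Hy]; [exact Ht|].
      destruct (Req_EM_T y t) as [->|Hne]; [exact Ht|].
      destruct (Hcov y (in_in_remove _ _ Hne Hy)) as [i [Hi <-]].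
      destruct (Hcov' i Hi) as [i' [Hi' E]]. exists i'. split; [lia|exact E].
Qed.

Lemma partition01_range s k j : partition01 s k -> (j <= k + 1)%nat -> 0 <= s j <= 1.
Proof.
  intros [Hs [H0 H1]] Hj. rewrite <- H0, <- H1.
  split; apply (incr_upto_le s (k + 1)); auto; lia.
Qed.

Lemma partition01_inner s k j : partition01 s k -> (1 <= j <= k)%nat -> 0 < s j < 1.
Proof. intros [Hs [H0 H1]] Hj. rewrite <- H0, <- H1. split; apply Hs; lia. Qed.

Section Refine.
Variables (G : graph) (C : complex2) (k : nat) (fv : nat -> point) (fe : nat -> R -> point)
  (tau : nat -> nat -> R).
Hypothesis Hwf : wf_graph G.
Hypothesis Hemb : is_embedding G C fv fe.
Hypothesis Htau : forall e, (e < gne G)%nat -> partition01 (tau e) k.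

Definition refined_time (e j : nat) (u : R) : R := tau e j + (tau e (j + 1) - tau e j) * u.

(* The new vertex [gnv G + e * k + j] sits at time [tau e (j + 1)] of edge [e]. *)
Definition refined_vertex (w : nat) : point :=
  if Nat.ltb w (gnv G) then fv w
  else let e := ((w - gnv G) / k)%nat in fe e (tau e ((w - gnv G) mod k + 1)%nat).

Definition refined_edge (e' : nat) (u : R) : point :=
  let e := (e' / (k + 1))%nat in fe e (refined_time e (e' mod (k + 1)) u).

Lemma refined_edge_eq e j u : (j <= k)%nat ->
  refined_edge (e * (k + 1) + j) u = fe e (refined_time e j u).
Proof.
  intros Hj. unfold refined_edge. destruct (div_mod_of_lt (k + 1) e j ltac:(lia)) as [-> ->].
  reflexivity.
Qed.

Lemma refined_vertex_old v : (v < gnv G)%nat -> refined_vertex v = fv v.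
Proof. intros H. unfold refined_vertex. apply Nat.ltb_lt in H. rewrite H. reflexivity. Qed.

Lemma refined_vertex_new e j : (j < k)%nat ->
  refined_vertex (gnv G + e * k + j) = fe e (tau e (j + 1)%nat).
Proof.
  intros H. unfold refined_vertex. destruct (Nat.ltb_spec (gnv G + e * k + j) (gnv G)); [lia|].
  replace (gnv G + e * k + j - gnv G)%nat with (e * k + j)%nat by lia.
  destruct (div_mod_of_lt k e j H) as [-> ->]. reflexivity.
Qed.

Lemma refined_time_between e j u : (e < gne G)%nat -> (j <= k)%nat -> 0 <= u <= 1 ->
  tau e j <= refined_time e j u <= tau e (j + 1)%nat /\ 0 <= refined_time e j u <= 1.
Proof.
  intros He Hj Hu. unfold refined_time.
  pose proof (proj1 (Htau e He) j (j + 1)%nat ltac:(lia) ltac:(lia)).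
  pose proof (partition01_range _ _ j (Htau e He) ltac:(lia)).
  pose proof (partition01_range _ _ (j + 1) (Htau e He) ltac:(lia)). nra.
Qed.

Lemma refined_time_inner e j u : (e < gne G)%nat -> (j <= k)%nat -> 0 < u < 1 ->
  tau e j < refined_time e j u < tau e (j + 1)%nat /\ 0 < refined_time e j u < 1.
Proof.
  intros He Hj Hu. unfold refined_time.
  pose proof (proj1 (Htau e He) j (j + 1)%nat ltac:(lia) ltac:(lia)).
  pose proof (partition01_range _ _ j (Htau e He) ltac:(lia)).
  pose proof (partition01_range _ _ (j + 1) (Htau e He) ltac:(lia)). nra.
Qed.

Lemma refined_node e j : (e < gne G)%nat -> (j <= k + 1)%nat ->
  eqpt (fe e (tau e j)) (refined_vertex (subdiv_node G k e j)).
Proof.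
  intros He Hj. destruct Hemb as [_ [Hfe _]]. destruct (Hfe e He) as [_ [_ [E0 E1]]].
  destruct (Htau e He) as [_ [H0 H1]]. destruct (Hwf e He).
  destruct (Nat.eq_dec j 0) as [->|]; [rewrite subdiv_node_first, H0, refined_vertex_old; auto|].
  destruct (Nat.eq_dec j (k + 1)) as [->|];
    [rewrite subdiv_node_last, H1, refined_vertex_old; auto|].
  rewrite subdiv_node_mid, refined_vertex_new by lia.
  replace (j - 1 + 1)%nat with j by lia. intro; reflexivity.
Qed.

Lemma refined_vertex_cases w : (w < gnv (subdivide G k))%nat ->
  ((w < gnv G)%nat /\ refined_vertex w = fv w) \/
  exists e j, (e < gne G)%nat /\ (1 <= j <= k)%nat /\ w = (gnv G + e * k + (j - 1))%nat /\
    refined_vertex w = fe e (tau e j).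
Proof.
  intros Hw. destruct (subdivide_vertex_cases G k w Hw) as [H|[e [j [He [Hj ->]]]]].
  - left. split; [auto|apply refined_vertex_old; auto].
  - right. exists e, (j + 1)%nat. repeat split; [auto|lia|lia|lia|apply refined_vertex_new; auto].
Qed.

Lemma refined_edge_path e' : (e' < gne (subdivide G k))%nat ->
  cont01 C (refined_edge e') /\ (forall t, 0 <= t <= 1 -> in_real C (refined_edge e' t)) /\
  eqpt (refined_edge e' 0) (refined_vertex (gsrc (subdivide G k) e')) /\
  eqpt (refined_edge e' 1) (refined_vertex (gtgt (subdivide G k) e')).
Proof.
  intros He'. destruct (subdivide_edge_cases G k e' He') as [e [j [He [Hj ->]]]].
  destruct Hemb as [_ [Hfe _]]. destruct (Hfe e He) as [Hc [Hr _]].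
  rewrite subdivide_src, subdivide_tgt by lia.
  split; [|split; [|split]].
  - apply cont_on_ext with (fun u => fe e (tau e j + (tau e (j + 1)%nat - tau e j) * u)).
    + apply cont_on_comp_affine with 0 1; [exact Hc| |].
      * pose proof (proj1 (Htau e He) j (j + 1)%nat ltac:(lia) ltac:(lia)). lra.
      * intros u Hu. apply (refined_time_between e j u He Hj Hu).
    + intros u _ i. rewrite refined_edge_eq by lia. reflexivity.
  - intros u Hu. rewrite refined_edge_eq by lia. apply Hr, (refined_time_between e j u He Hj Hu).
  - rewrite refined_edge_eq by lia. unfold refined_time. rewrite Rmult_0_r, Rplus_0_r.
    apply refined_node; auto; lia.
  - rewrite refined_edge_eq by lia. unfold refined_time.
    replace (tau e j + (tau e (j + 1)%nat - tau e j) * 1) with (tau e (j + 1)%nat) by ring.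
    apply refined_node; auto; lia.
Qed.

Lemma refined_vertex_injective v w : (v < gnv (subdivide G k))%nat ->
  (w < gnv (subdivide G k))%nat -> eqpt (refined_vertex v) (refined_vertex w) -> v = w.
Proof.
  intros Hv Hw E. destruct Hemb as [_ [_ [Hinj [Hev Hee]]]].
  destruct (refined_vertex_cases v Hv) as [[A1 A2]|[e [j [A1 [A2 [A3 A4]]]]]];
  destruct (refined_vertex_cases w Hw) as [[B1 B2]|[e2 [j2 [B1 [B2 [B3 B4]]]]]];
  rewrite ?A2, ?A4, ?B2, ?B4 in E.
  - apply Hinj; auto.
  - exfalso. apply (Hev e2 v (tau e2 j2) B1 A1 (partition01_inner _ _ _ (Htau e2 B1) B2)).
    apply eqpt_sym; exact E.
  - exfalso. exact (Hev e w (tau e j) A1 B1 (partition01_inner _ _ _ (Htau e A1) A2) E).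
  - destruct (Hee _ _ _ _ A1 B1 (partition01_inner _ _ _ (Htau e A1) A2)
                (partition01_inner _ _ _ (Htau e2 B1) B2) E) as [<- Q].
    assert (j = j2) by (apply (incr_upto_inj (tau e) (k + 1) (proj1 (Htau e A1))); auto; lia).
    subst; auto.
Qed.

Lemma refined_edge_avoids_vertices e' w t : (e' < gne (subdivide G k))%nat ->
  (w < gnv (subdivide G k))%nat -> 0 < t < 1 -> ~ eqpt (refined_edge e' t) (refined_vertex w).
Proof.
  intros He' Hw Ht E. destruct Hemb as [_ [_ [_ [Hev Hee]]]].
  destruct (subdivide_edge_cases G k e' He') as [e [j [He [Hj ->]]]].
  rewrite refined_edge_eq in E by lia.
  destruct (refined_time_inner e j t He Hj Ht) as [Hgap Hin].
  destruct (refined_vertex_cases w Hw) as [[A1 A2]|[e2 [j2 [A1 [A2 [_ A4]]]]]];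
    rewrite ?A2, ?A4 in E.
  - exact (Hev _ _ _ He A1 Hin E).
  - destruct (Hee _ _ _ _ He A1 Hin (partition01_inner _ _ _ (Htau e2 A1) A2) E) as [<- Q].
    apply (incr_upto_gap_empty (tau e) (k + 1) (proj1 (Htau e He)) j2 j); [lia|lia|].
    rewrite <- Q. exact Hgap.
Qed.

Lemma refined_edge_injective e1' e2' t1 t2 : (e1' < gne (subdivide G k))%nat ->
  (e2' < gne (subdivide G k))%nat -> 0 < t1 < 1 -> 0 < t2 < 1 ->
  eqpt (refined_edge e1' t1) (refined_edge e2' t2) -> e1' = e2' /\ t1 = t2.
Proof.
  intros He1 He2 Ht1 Ht2 E. destruct Hemb as [_ [_ [_ [_ Hee]]]].
  destruct (subdivide_edge_cases G k e1' He1) as [e1 [j1 [H1 [Hj1 ->]]]].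
  destruct (subdivide_edge_cases G k e2' He2) as [e2 [j2 [H2 [Hj2 ->]]]].
  rewrite !refined_edge_eq in E by lia.
  destruct (refined_time_inner e1 j1 t1 H1 Hj1 Ht1) as [Hgap1 Hin1].
  destruct (refined_time_inner e2 j2 t2 H2 Hj2 Ht2) as [Hgap2 Hin2].
  destruct (Hee _ _ _ _ H1 H2 Hin1 Hin2 E) as [<- Q].
  assert (j1 = j2) as <-.
  { apply (incr_upto_gap_unique (tau e1) (k + 1) (proj1 (Htau e1 H1))
             j1 j2 (refined_time e1 j1 t1)); [lia|lia|exact Hgap1|rewrite Q; exact Hgap2]. }
  split; [reflexivity|]. unfold refined_time in Q.
  pose proof (proj1 (Htau e1 H1) j1 (j1 + 1)%nat ltac:(lia) ltac:(lia)).
  apply Rmult_eq_reg_l with (tau e1 (j1 + 1)%nat - tau e1 j1); lra.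
Qed.

Lemma refined_is_embedding : is_embedding (subdivide G k) C refined_vertex refined_edge.
Proof.
  split; [|split; [exact refined_edge_path|split; [exact refined_vertex_injective|split;
    [exact refined_edge_avoids_vertices|exact refined_edge_injective]]]].
  intros w Hw. destruct Hemb as [Hfv [Hfe _]].
  destruct (refined_vertex_cases w Hw) as [[A1 ->]|[e [j [A1 [A2 [_ ->]]]]]]; [auto|].
  apply (Hfe e A1). pose proof (partition01_inner _ _ _ (Htau e A1) A2). lra.
Qed.

Lemma refined_image_at_vertex x :
  (forall e t, (e < gne G)%nat -> 0 < t < 1 -> eqpt (fe e t) x ->
     exists j, (1 <= j <= k)%nat /\ tau e j = t) ->
  in_image (subdivide G k) refined_vertex refined_edge x ->
  exists v, (v < gnv (subdivide G k))%nat /\ eqpt (refined_vertex v) x.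
Proof.
  intros Hx [[v Hv]|[e' [u [He' [Hu Eu]]]]]; [exists v; exact Hv|].
  pose proof (subdivide_edge_cases G k e' He') as [e [j [He [Hj ->]]]].
  destruct (Req_dec u 0) as [->|U0]; [|destruct (Req_dec u 1) as [->|U1]].
  - exists (gsrc (subdivide G k) (e * (k + 1) + j)). split.
    + rewrite subdivide_src by lia. apply subdiv_node_lt; auto; lia.
    + eapply eqpt_trans; [apply eqpt_sym, refined_edge_path; auto|exact Eu].
  - exists (gtgt (subdivide G k) (e * (k + 1) + j)). split.
    + rewrite subdivide_tgt by lia. apply subdiv_node_lt; auto; lia.
    + eapply eqpt_trans; [apply eqpt_sym, refined_edge_path; auto|exact Eu].
  - exfalso. rewrite refined_edge_eq in Eu by lia.
    destruct (refined_time_inner e j u He Hj ltac:(lra)) as [Hgap Hin].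
    destruct (Hx e _ He Hin Eu) as [i [Hi Ei]].
    apply (incr_upto_gap_empty (tau e) (k + 1) (proj1 (Htau e He)) i j); [lia|lia|].
    rewrite Ei. exact Hgap.
Qed.

End Refine.

Lemma hitting_times (f : R -> point) (xs : list point) :
  (forall t t', 0 < t < 1 -> 0 < t' < 1 -> eqpt (f t) (f t') -> t = t') ->
  exists T, (length T <= length xs)%nat /\ (forall t, In t T -> 0 < t < 1) /\
    forall x t, In x xs -> 0 < t < 1 -> eqpt (f t) x -> In t T.
Proof.
  intros Hinj. induction xs as [|x xs [T [Hlen [HT Hcov]]]].
  - exists []. split; [auto|split; [intros _ []|intros _ _ []]].
  - destruct (excluded_middle_informative (exists t, 0 < t < 1 /\ eqpt (f t) x))
      as [[t [Ht E]]|Hno].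
    + exists (t :: T). split; [simpl; lia|split].
      * intros t' [<-|Ht']; auto.
      * intros y t' [<-|Hy] Ht' E'; [left|right; eauto].
        apply Hinj; auto. eapply eqpt_trans; [exact E|apply eqpt_sym, E'].
    + exists T. split; [simpl; lia|split; [exact HT|]].
      intros y t' [<-|Hy] Ht' E'; [exfalso; eauto|eauto].
Qed.

Lemma subdivision_times_exist G C fv fe k (xs : list point) :
  is_embedding G C fv fe -> length xs = k ->
  exists tau, (forall e, (e < gne G)%nat -> partition01 (tau e) k) /\
    forall x e t, In x xs -> (e < gne G)%nat -> 0 < t < 1 -> eqpt (fe e t) x ->
      exists j, (1 <= j <= k)%nat /\ tau e j = t.
Proof.
  intros [_ [_ [_ [_ Hee]]]] Hlen.
  destruct (choice (fun e s => (e < gne G)%nat -> partition01 s k /\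
                     forall x t, In x xs -> 0 < t < 1 -> eqpt (fe e t) x ->
                       exists j, (1 <= j <= k)%nat /\ s j = t)) as [tau Htau].
  - intros e. destruct (lt_dec e (gne G)) as [He|He].
    + destruct (hitting_times (fe e) xs) as [T [HTlen [HT Hcov]]].
      { intros t t' Ht Ht' E. exact (proj2 (Hee e e t t' He He Ht Ht' E)). }
      destruct (partition01_through k T HT ltac:(lia)) as [s [Hs Hs']].
      exists s. intros _. split; [exact Hs|eauto].
    + destruct (partition01_through k [] ltac:(intros _ []) ltac:(simpl; lia)) as [s _].
      exists s. intros; lia.
  - exists tau. split; [intros e He; apply (Htau e He)|].
    intros x e t Hx He Ht E. exact (proj2 (Htau e He) x t Hx Ht E).
Qed.

Theorem mainTheorem5 (C : complex2) (k : nat) (G : graph) :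
  is_2complex C -> ~ has_3book C -> num_singular C k -> wf_graph G ->
  (embeds G C <->
   exists fv fe, is_embedding (subdivide G k) C fv fe /\
     forall p, singular C p -> in_image (subdivide G k) fv fe (node_pt p) ->
       exists v, (v < gnv (subdivide G k))%nat /\ eqpt (fv v) (node_pt p)).
Proof.
  intros _ _ [l [_ [Hl Hlen]]] Hwf. split.
  - intros [fv [fe Hemb]].
    destruct (subdivision_times_exist G C fv fe k (map node_pt l) Hemb) as [tau [Htau Hcov]];
      [rewrite length_map; exact Hlen|].
    exists (refined_vertex G k fv fe tau), (refined_edge k fe tau). split.
    + apply refined_is_embedding; auto.
    + intros p Hp. apply (refined_image_at_vertex G C); auto.
      intros e t He Ht E. apply (Hcov (node_pt p) e t); auto. apply in_map, Hl, Hp.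
  - intros [fv [fe [Hemb _]]]. exists fv, (glued_edge k fe).
    apply glued_edge_is_embedding. exact Hemb.
Qed.
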